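(* Let $(x_t)_{t\in\Omega}$ be a continuous frame for a finite dimensional Hilbert space $H$. Then $(x_t)_{t\in\Omega}$ does phase retrieval if and only if $(x_t)_{t\in\Omega}$ does $C$-stable phase retrieval for some constant $C>0$.
   Context: $H$ is a real or complex Hilbert space. A continuous frame $(x_t)_{t\in\Omega}$ over a measure space $(\Omega,\mu)$ satisfies $A\|x\|^2\le\int_\Omega|\langle x,x_t\rangle|^2d\mu\le B\|x\|^2$ for all $x\in H$ with $B\ge A>0$; its analysis operator is $\Theta(x)=(\langle x,x_t\rangle)_{t\in\Omega}\in L_2(\Omega)$ and $|\Theta x|=(|\langle x,x_t\rangle|)_{t\in\Omega}$. The frame does phase retrieval if whenever $x,y\in H$ satisfy $|\Theta x|=|\Theta y|$ (as elements of $L_2(\Omega)$) there is a scalar $|\lambda|=1$ with $x=\lambda y$. For $C>0$ it does $C$-stable phase retrieval if $\min_{|\lambda|=1}\|x-\lambda y\|\le C\||\Theta x|-|\Theta y|\|$ for all $x,y\in H$. *)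

From HB Require Import structures.
From mathcomp Require Import all_boot all_order all_algebra.
From mathcomp Require Import all_classical all_reals all_analysis.
From mathcomp Require Import complex.

Set Implicit Arguments.
Unset Strict Implicit.
Unset Printing Implicit Defensive.

Import Order.TTheory GRing.Theory Num.Theory.
Local Open Scope ring_scope.

(* A finite dimensional Hilbert space over the scalar field K (K = R or
   K = R[i]) is modelled, up to isometric isomorphism, as K^n = 'rV[K]_n with
   the standard inner product <x,y> = \sum_i x_i * conj (y_i). *)
Section ContinuousFrames.
Variables (R : realType) (K : numFieldType) (conj : K -> K) (absK : K -> R).
Variables (d : measure_display) (T : measurableType d)
  (mu : {measure set T -> \bar R}) (n : nat).

Definition ip (x y : 'rV[K]_n) : K := \sum_(i < n) x ord0 i * conj (y ord0 i).

Definition hnorm (x : 'rV[K]_n) : R := Num.sqrt (absK (ip x x)).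

Definition absTheta (xt : T -> 'rV[K]_n) (x : 'rV[K]_n) : T -> R :=
  fun t => absK (ip x (xt t)).

Definition is_continuous_frame (xt : T -> 'rV[K]_n) : Prop :=
  (forall x, measurable_fun setT (absTheta xt x)) /\
  exists A B : R, 0 < A /\ A <= B /\
    forall x : 'rV[K]_n,
      ((A * hnorm x ^+ 2)%:E <= \int[mu]_t ((absTheta xt x t) ^+ 2)%:E)%E /\
      (\int[mu]_t ((absTheta xt x t) ^+ 2)%:E <= (B * hnorm x ^+ 2)%:E)%E.

(* phase retrieval: |Theta x| = |Theta y| in L_2 (i.e. mu-a.e.) implies
   x = lambda y for some unimodular scalar lambda. *)
Definition does_phase_retrieval (xt : T -> 'rV[K]_n) : Prop :=
  forall x y : 'rV[K]_n,
    {ae mu, forall t, absTheta xt x t = absTheta xt y t} ->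
    exists lam : K, absK lam = 1 /\ x = lam *: y.

(* C-stable phase retrieval:
   min_{|lambda|=1} ||x - lambda y|| <= C || |Theta x| - |Theta y| ||_{L_2}.
   (The minimum over the compact unit circle is attained, so "min <= c"
   is "some unimodular lambda achieves <= c".) *)
Definition does_stable_phase_retrieval (C : R) (xt : T -> 'rV[K]_n) : Prop :=
  forall x y : 'rV[K]_n,
    exists lam : K, absK lam = 1 /\
      ((hnorm (x - lam *: y))%:E <=
        C%:E * Lnorm mu 2%:E (fun t => (absTheta xt x t - absTheta xt y t)%:E))%E.

End ContinuousFrames.

Definition corollary2p3_for (R : realType) (K : numFieldType)
  (conj : K -> K) (absK : K -> R) : Prop :=
  forall (d : measure_display) (T : measurableType d)
    (mu : {measure set T -> \bar R}) (n : nat) (xt : T -> 'rV[K]_n),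
    is_continuous_frame conj absK mu xt ->
    (does_phase_retrieval conj absK mu xt <->
     exists C : R, 0 < C /\ does_stable_phase_retrieval conj absK mu C xt).

(* Stability is a quantitative form of phase retrieval, obtained by compactness
   once the obstruction at pairs x ~ lambda y is removed.  Rotating y by a phase
   makes <x, y> real and a hyperbolic rotation of the pair (x, y) then gives an
   orthogonal pair (u, v) with the same intensity differences
   |<u, x_t>|^2 - |<v, x_t>|^2 = |<x, x_t>|^2 - |<y, x_t>|^2 and
   ||x - lambda y|| (||x|| + ||y||) <= 2 (||u||^2 + ||v||^2).
   On orthogonal pairs the integral of | |<u, x_t>|^2 - |<v, x_t>|^2 | is at least
   c (||u|| + ||v||)^2: normalizing ||u|| + ||v|| = 1 gives a compact set on which
   it is continuous and, by phase retrieval, positive.  By the upper frame bound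
   that integral is at most (3/2) sqrt B || |Theta x| - |Theta y| ||_2 (||x|| + ||y||),
   which yields C = 3 sqrt B / c.  Real and complex scalars are treated at once:
   K is a field with an involution fixing R and a modulus with a a^* = |a|^2. *)

From Pilot Require Import Defs.
From HB Require Import structures.
From mathcomp Require Import all_boot all_order all_algebra.
From mathcomp Require Import all_classical all_reals all_analysis.
From mathcomp Require Import complex measurable_realfun ring lra.

Set Implicit Arguments.
Unset Strict Implicit.
Unset Printing Implicit Defensive.
Import Order.TTheory GRing.Theory Num.Theory.
Import numFieldNormedType.Exports.
Local Open Scope ring_scope.
Local Open Scope classical_set_scope.

Lemma mx_entry_le_norm (R : realDomainType) p q (w : 'M[R]_(p, q)) i j :
  `|w i j| <= `|w|.
Proof. by rewrite [X in _ <= X]/Num.norm /= mx_normrE (le_bigmax _ _ (i, j)). Qed.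

Lemma mx_norm_le (R : realDomainType) p q (w : 'M[R]_(p, q)) c :
  0 <= c -> (forall i j, `|w i j| <= c) -> `|w| <= c.
Proof. by move=> c0 wc; rewrite /Num.norm /= mx_normrE; apply: bigmax_le => // ij _. Qed.

Lemma norm_lsubmx_le (R : realDomainType) p q1 q2 (w : 'M[R]_(p, q1 + q2)) :
  `|lsubmx w| <= `|w|.
Proof. by apply: mx_norm_le => // i j; rewrite mxE mx_entry_le_norm. Qed.

Lemma norm_rsubmx_le (R : realDomainType) p q1 q2 (w : 'M[R]_(p, q1 + q2)) :
  `|rsubmx w| <= `|w|.
Proof. by apply: mx_norm_le => // i j; rewrite mxE mx_entry_le_norm. Qed.

Lemma norm_row_mx_le (R : realDomainType) p q1 q2 (a : 'M[R]_(p, q1)) (b : 'M[R]_(p, q2)) :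
  `|row_mx a b| <= `|a| + `|b|.
Proof.
apply: mx_norm_le => [|i j]; first by rewrite addr_ge0.
rewrite mxE; case: splitP => k _.
  by rewrite (le_trans (mx_entry_le_norm _ _ _)) // lerDl.
by rewrite (le_trans (mx_entry_le_norm _ _ _)) // lerDr.
Qed.

Lemma continuous_locally_lipschitz (R : realType) (V : normedModType R) (f : V -> R) :
  (forall w, exists k, forall w', `|w' - w| <= 1 -> `|f w' - f w| <= k * `|w' - w|) ->
  continuous f.
Proof.
move=> flip w; have [k fk] := flip w.
apply/(@cvgrPdist_lt _ _ _ _ (nbhs_filter w)) => e e0.
pose k' := `|k| + 1; have k'0 : 0 < k' by rewrite ltr_wpDl.
have d0 : 0 < Num.min 1 (e / k') by rewrite lt_min ltr01 divr_gt0.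
near=> w'.
have wd : `|w' - w| < Num.min 1 (e / k').
  have : ball w (Num.min 1 (e / k')) w' by near: w'; exact: nbhsx_ballx.
  by rewrite -ball_normE /ball_ /= distrC.
rewrite lt_min in wd; case/andP: wd => /ltW w1 we.
rewrite distrC; apply: le_lt_trans (fk _ w1) _.
apply: le_lt_trans (_ : k' * `|w' - w| < e); last by rewrite mulrC -ltr_pdivlMr.
by rewrite ler_wpM2r // /k' (le_trans (ler_norm _)) // lerDl.
Unshelve. all: by end_near.
Qed.

Lemma closed_ball_min (R : realType) m (f : 'rV[R]_m -> R) : continuous f ->
  exists2 c : 'rV[R]_m, `|c| <= 1 & forall w, `|w| <= 1 -> f c <= f w.
Proof.
move=> cf; pose A := closed_ball (0 : 'rV[R]_m) 1.
have AE w : A w <-> `|w| <= 1 by rewrite /A closed_ballE // /closed_ball_ /= sub0r normrN.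
have cA : compact A.
  apply: bounded_closed_compact; last exact: closed_ball_closed.
  by exists 1; split => // M M1 w /AE w1 /=; exact: le_trans w1 (ltW M1).
have A0 : A !=set0 by exists 0; apply/AE; rewrite normr0.
have [c /set_mem /AE c1 cmin] := compact_EVT_min A0 cA (continuous_subspaceT cf).
by exists c => // w /AE /mem_set; apply: cmin.
Qed.

Lemma sqr_dist_le (R : realFieldType) (X Y Z e : R) : 0 <= X -> 0 <= Y ->
  `|X - Y| <= Z -> 0 < e -> `|X ^+ 2 - Y ^+ 2| <= Z ^+ 2 / (2 * e) + e * (X ^+ 2 + Y ^+ 2).
Proof.
move=> X0 Y0 XYZ e0.
have Z0 : 0 <= Z := le_trans (normr_ge0 _) XYZ.
have -> : X ^+ 2 - Y ^+ 2 = (X - Y) * (X + Y) by ring.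
rewrite normrM (ger0_norm (addr_ge0 X0 Y0)).
have amgm : Z * (X + Y) <= Z ^+ 2 / (2 * e) + e * (X + Y) ^+ 2 / 2.
  rewrite -subr_ge0 (_ : _ - _ = (Z - e * (X + Y)) ^+ 2 / (2 * e)).
    by rewrite divr_ge0 ?sqr_ge0 // mulr_ge0 // ltW.
  by field; rewrite gt_eqF.
have : e * (X + Y) ^+ 2 / 2 <= e * (X ^+ 2 + Y ^+ 2).
  rewrite -subr_ge0 (_ : _ - _ = e * (X - Y) ^+ 2 / 2).
    by rewrite divr_ge0 // mulr_ge0 ?sqr_ge0 // ltW.
  by field.
have : `|X - Y| * (X + Y) <= Z * (X + Y) by rewrite ler_wpM2r ?addr_ge0.
lra.
Qed.

(* c = cosh t and s = sinh t, where tanh 2t = - 2 r / S *)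
Lemma hyperbolic_params (R : rcfType) (S r : R) : 0 <= r -> 2 * r < S ->
  exists c s : R, c ^+ 2 - s ^+ 2 = 1 /\ c * s * S + (c ^+ 2 + s ^+ 2) * r = 0.
Proof.
move=> r0 rS; have S0 : 0 < S by lra.
pose tau := 2 * r / S.
have tau0 : 0 <= tau by rewrite divr_ge0 //; lra.
have tau1 : tau < 1 by rewrite ltr_pdivrMr // mul1r.
pose D := Num.sqrt (1 - tau ^+ 2).
have D2 : D ^+ 2 = 1 - tau ^+ 2 by rewrite sqr_sqrtr //; nra.
have D0 : 0 < D by rewrite sqrtr_gt0; nra.
pose c := Num.sqrt ((1 + D) / (2 * D)).
have c2 : c ^+ 2 = (1 + D) / (2 * D) by rewrite sqr_sqrtr // divr_ge0 //; lra.
have c0 : 0 < c by rewrite sqrtr_gt0 divr_gt0 //; lra.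
exists c, (- tau / (2 * D * c)).
have -> : (- tau / (2 * D * c)) ^+ 2 = (1 - D) / (2 * D).
  rewrite expr_div_n !exprMn c2 sqrrN (_ : tau ^+ 2 = 1 - D ^+ 2); last by lra.
  by field; apply/andP; split; lra.
split; first by rewrite c2; field; lra.
rewrite c2 /tau; field; apply/and3P; split; lra.
Qed.

Section InnerProduct.
Variables (R : realType) (K : numFieldType) (conj : K -> K) (absK : K -> R)
  (ofR : {rmorphism R -> K}).
Hypothesis conjD : {morph conj : a b / a + b}.
Hypothesis conjM : {morph conj : a b / a * b}.
Hypothesis conjK : involutive conj.
Hypothesis conjR : forall r, conj (ofR r) = ofR r.
Hypothesis mulJ : forall a, a * conj a = ofR (absK a ^+ 2).
Hypothesis absD : forall a b, absK (a + b) <= absK a + absK b.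
Hypothesis abs_ge0 : forall a, 0 <= absK a.

Lemma conj0 : conj 0 = 0.
Proof. by rewrite -(rmorph0 ofR) conjR. Qed.

Lemma eq_ofR_sqr (r s : R) : 0 <= r -> 0 <= s -> ofR (r ^+ 2) = ofR (s ^+ 2) -> r = s.
Proof. by move=> r0 s0 /fmorph_inj /eqP; rewrite eqrXn2 // => /eqP. Qed.

Lemma absM a b : absK (a * b) = absK a * absK b.
Proof.
apply: eq_ofR_sqr (abs_ge0 _) (mulr_ge0 (abs_ge0 _) (abs_ge0 _)) _.
by rewrite exprMn (rmorphM ofR (absK a ^+ 2)) -!mulJ conjM; ring.
Qed.

Lemma absR r : absK (ofR r) = `|r|.
Proof.
apply: eq_ofR_sqr (abs_ge0 _) (normr_ge0 _) _.
by rewrite -mulJ conjR real_normK ?num_real // rmorphXn.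
Qed.

Lemma absJ a : absK (conj a) = absK a.
Proof. by apply: eq_ofR_sqr (abs_ge0 _) (abs_ge0 _) _; rewrite -!mulJ conjK mulrC. Qed.

Lemma abs_eq0 a : absK a = 0 -> a = 0.
Proof.
move=> a0; have /eqP := mulJ a; rewrite a0 expr0n rmorph0 mulf_eq0.
by case/orP => /eqP // ja; rewrite -[a]conjK ja conj0.
Qed.

Lemma abs0 : absK 0 = 0.
Proof. by rewrite -(rmorph0 ofR) absR normr0. Qed.

Lemma abs1 : absK 1 = 1.
Proof. by rewrite -(rmorph1 ofR) absR normr1. Qed.

Lemma ler_dist_abs a b : `|absK a - absK b| <= absK (a - b).
Proof.
have absN c : absK (- c) = absK c.
  by rewrite -mulN1r -(rmorphN1 ofR) absM absR normrN normr1 mul1r.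
rewrite ler_norml; apply/andP; split.
  by have := absD (b - a) a; rewrite subrK -[b - a]opprB absN; lra.
by have := absD (a - b) b; rewrite subrK; lra.
Qed.

Variable n : nat.
Implicit Types x y z : 'rV[K]_n.
Local Notation ip := (ip conj).
Local Notation hn := (hnorm conj absK).

Lemma ipDl x y z : ip (x + y) z = ip x z + ip y z.
Proof. by rewrite /Defs.ip -big_split; apply: eq_bigr => i _; rewrite mxE mulrDl. Qed.

Lemma ipZl a x z : ip (a *: x) z = a * ip x z.
Proof. by rewrite /Defs.ip mulr_sumr; apply: eq_bigr => i _; rewrite mxE mulrA. Qed.

Lemma ipC x y : ip y x = conj (ip x y).
Proof.
rewrite /Defs.ip (big_morph conj conjD conj0).
by apply: eq_bigr => i _; rewrite conjM conjK mulrC.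
Qed.

Lemma ipDr x y z : ip x (y + z) = ip x y + ip x z.
Proof. by rewrite ipC ipDl conjD -!ipC. Qed.

Lemma ipZr a x y : ip x (a *: y) = conj a * ip x y.
Proof. by rewrite ipC ipZl conjM -ipC. Qed.

Lemma ipBl x y z : ip (x - y) z = ip x z - ip y z.
Proof. by rewrite ipDl -scaleN1r ipZl mulN1r. Qed.

Lemma ipBr x y z : ip x (y - z) = ip x y - ip x z.
Proof. by rewrite ipDr -scaleN1r ipZr -(rmorphN1 ofR) conjR rmorphN1 mulN1r. Qed.

Lemma ip0l y : ip 0 y = 0.
Proof. by rewrite -(scale0r 0) ipZl mul0r. Qed.

Lemma ip0r x : ip x 0 = 0.
Proof. by rewrite ipC ip0l conj0. Qed.

Lemma ip_self x : ip x x = ofR (\sum_i absK (x ord0 i) ^+ 2).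
Proof. by rewrite rmorph_sum; apply: eq_bigr => i _; rewrite mulJ. Qed.

Lemma hnorm_sqr x : hn x ^+ 2 = \sum_i absK (x ord0 i) ^+ 2.
Proof.
have s0 : 0 <= \sum_i absK (x ord0 i) ^+ 2 by apply: sumr_ge0 => i _; apply: sqr_ge0.
by rewrite /hnorm ip_self absR ger0_norm // sqr_sqrtr.
Qed.

Lemma ip_selfE x : ip x x = ofR (hn x ^+ 2).
Proof. by rewrite hnorm_sqr ip_self. Qed.

Lemma hnorm_ge0 x : 0 <= hn x.
Proof. exact: sqrtr_ge0. Qed.

Lemma hnorm_eq0 x : hn x = 0 -> x = 0.
Proof.
move=> x0; apply/rowP => i; rewrite mxE; apply: abs_eq0.
have /esym/psumr_eq0P xi0 : 0 = \sum_i absK (x ord0 i) ^+ 2.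
  by rewrite -hnorm_sqr x0 expr0n.
by have /eqP := xi0 (fun j _ => sqr_ge0 _) i isT; rewrite sqrf_eq0 => /eqP.
Qed.

Lemma hnorm_sub_le0 x y : hn (x - y) <= 0 -> x = y.
Proof.
move=> xy; apply/eqP; rewrite -subr_eq0; apply/eqP/hnorm_eq0/le_anti/andP.
by split; [exact: xy | exact: hnorm_ge0].
Qed.

Lemma hnorm0 : hn (0 : 'rV[K]_n) = 0.
Proof. by rewrite /hnorm ip0l abs0 sqrtr0. Qed.

Lemma hnormZ a x : hn (a *: x) = absK a * hn x.
Proof.
apply: eq_ofR_sqr (hnorm_ge0 _) (mulr_ge0 (abs_ge0 _) (hnorm_ge0 _)) _.
by rewrite -ip_selfE ipZl ipZr mulrA mulJ ip_selfE -rmorphM exprMn.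
Qed.

Lemma hnorm_distC x y : hn (x - y) = hn (y - x).
Proof.
by rewrite -opprB -scaleN1r hnormZ -(rmorphN1 ofR) absR normrN normr1 mul1r.
Qed.

Lemma ip_combR x y (r a b c d : R) : ip x y = ofR r ->
  ip (ofR a *: x + ofR b *: y) (ofR c *: x + ofR d *: y) =
  ofR (a * c * hn x ^+ 2 + (a * d + b * c) * r + b * d * hn y ^+ 2).
Proof.
move=> e; have e' : ip y x = ofR r by rewrite ipC e conjR.
rewrite !(ipDl, ipDr, ipZl, ipZr) !conjR !ip_selfE e e' !rmorphD !rmorphM; ring.
Qed.

Lemma hnorm_combR x y (r a b : R) : ip x y = ofR r ->
  hn (ofR a *: x + ofR b *: y) ^+ 2 =
  a ^+ 2 * hn x ^+ 2 + 2 * a * b * r + b ^+ 2 * hn y ^+ 2.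
Proof.
by move=> e; apply: (fmorph_inj ofR); rewrite -ip_selfE (ip_combR _ _ _ _ e); congr (ofR _); ring.
Qed.

Lemma ip_phase x y : exists2 w, absK w = 1 & ip x (w *: y) = ofR (absK (ip x y)).
Proof.
have [e|nz] := eqVneq (ip x y) 0.
  by exists 1; rewrite ?abs1 // scale1r e abs0 rmorph0.
have r0 : absK (ip x y) != 0 by apply: contra nz => /eqP /abs_eq0 ->.
exists (ip x y * ofR (absK (ip x y))^-1).
  by rewrite absM absR ger0_norm ?invr_ge0 // divff.
rewrite ipZr conjM conjR mulrAC (mulrC (conj _)) mulJ -rmorphM; congr (ofR _).
by rewrite expr2 -mulrA divff // mulr1.
Qed.

Lemma ip_cauchy_schwarz x y : absK (ip x y) <= hn x * hn y.
Proof.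
have [w w1 e] := ip_phase x y.
set r := absK (ip x y) in e *; set y1 := w *: y in e.
have <- : hn y1 = hn y by rewrite hnormZ w1 mul1r.
have [q0|qn0] := eqVneq (hn y1) 0.
  move: e; rewrite (hnorm_eq0 q0) ip0r => /esym/eqP.
  by rewrite fmorph_eq0 => /eqP ->; rewrite mulr_ge0 ?hnorm_ge0.
set a := hn x; set q := hn y1.
have q2 : 0 < q ^+ 2 by rewrite exprn_gt0 // lt_neqAle eq_sym qn0 hnorm_ge0.
have : 0 <= q ^+ 2 * ((a * q) ^+ 2 - r ^+ 2).
  have := sqr_ge0 (hn (ofR (q ^+ 2) *: x + ofR (- r) *: y1)).
  by rewrite (hnorm_combR _ _ e) -/a -/q; congr (_ <= _); ring.
rewrite pmulr_rge0 // subr_ge0.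
by rewrite ler_pXn2r ?nnegrE ?mulr_ge0 ?hnorm_ge0 ?abs_ge0.
Qed.

Lemma hnormD x y : hn (x + y) <= hn x + hn y.
Proof.
rewrite -(@ler_pXn2r _ 2) ?nnegrE ?addr_ge0 ?hnorm_ge0 //.
have e : ofR (hn (x + y) ^+ 2) = ofR (hn x ^+ 2 + hn y ^+ 2) + (ip x y + conj (ip x y)).
  by rewrite -!ip_selfE ipDl !ipDr !ip_selfE -ipC rmorphD; ring.
have : absK (ofR (hn (x + y) ^+ 2)) <= hn x ^+ 2 + hn y ^+ 2 + 2 * absK (ip x y).
  rewrite e; apply: le_trans (absD _ _) _.
  rewrite absR ger0_norm ?addr_ge0 ?sqr_ge0 // lerD2l.
  by apply: le_trans (absD _ _) _; rewrite absJ mulr2n mulrDl mul1r.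
rewrite absR ger0_norm ?sqr_ge0 // => h; apply: le_trans h _.
by have := ip_cauchy_schwarz x y; rewrite sqrrD; lra.
Qed.

Lemma ler_dist_hnorm x y : `|hn x - hn y| <= hn (x - y).
Proof.
rewrite ler_norml; apply/andP; split.
  by have := hnormD (y - x) x; rewrite subrK hnorm_distC; lra.
by have := hnormD (x - y) y; rewrite subrK; lra.
Qed.

Lemma ler_dist_abs_ip x y x' y' :
  `|absK (ip x' y') - absK (ip x y)| <= hn (x' - x) * hn y' + hn x * hn (y' - y).
Proof.
apply: le_trans (ler_dist_abs _ _) _.
rewrite (_ : ip x' y' - ip x y = ip (x' - x) y' + ip x (y' - y)); last first.
  by rewrite ipBl ipBr; ring.
exact: le_trans (absD _ _) (lerD (ip_cauchy_schwarz _ _) (ip_cauchy_schwarz _ _)).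
Qed.

Lemma abs_coord_le_hnorm x i : absK (x ord0 i) <= hn x.
Proof.
rewrite -(@ler_pXn2r _ 2) ?nnegrE ?hnorm_ge0 // hnorm_sqr (bigD1 i) //= lerDl.
by apply: sumr_ge0 => j _; apply: sqr_ge0.
Qed.

Lemma hnorm_le_bound x M : (forall i, absK (x ord0 i) <= M) -> hn x <= n%:R * M.
Proof.
move=> xM; have s0 : 0 <= \sum_i absK (x ord0 i) by apply: sumr_ge0.
have : hn x <= \sum_i absK (x ord0 i).
  rewrite -(@ler_pXn2r _ 2) ?nnegrE ?hnorm_ge0 // hnorm_sqr expr2 mulr_suml.
  apply: ler_sum => i _; rewrite expr2 ler_wpM2l // (bigD1 i) //= lerDl.
  exact: sumr_ge0.
move/le_trans; apply.
by rewrite -[n in n%:R]card_ord mulr_natl -sumr_const; apply: ler_sum.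
Qed.

Lemma hyperbolic_intensity_gap x y z (c s : R) : c ^+ 2 - s ^+ 2 = 1 ->
  absK (ip (ofR c *: x + ofR s *: y) z) ^+ 2 - absK (ip (ofR s *: x + ofR c *: y) z) ^+ 2
  = absK (ip x z) ^+ 2 - absK (ip y z) ^+ 2.
Proof.
move=> cs1; apply: (fmorph_inj ofR).
rewrite !rmorphB -!mulJ !ipDl !ipZl !conjD !conjM !conjR.
transitivity (ofR (c ^+ 2 - s ^+ 2) *
  (ip x z * conj (ip x z) - ip y z * conj (ip y z))).
  by rewrite rmorphB !rmorphXn; ring.
by rewrite cs1 rmorph1 mul1r.
Qed.

(* (||u||^2 + ||v||^2)^2 - 4 <u, v>^2 is invariant under hyperbolic rotations
   of a pair (u, v) with real <u, v>. *)
Lemma hyperbolic_orthogonalize x y (r : R) : ip x y = ofR r -> 0 <= r ->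
  2 * r < hn x ^+ 2 + hn y ^+ 2 ->
  exists u v, [/\ ip u v = 0,
    forall z, absK (ip u z) ^+ 2 - absK (ip v z) ^+ 2
            = absK (ip x z) ^+ 2 - absK (ip y z) ^+ 2 &
    (hn u ^+ 2 + hn v ^+ 2) ^+ 2 = (hn x ^+ 2 + hn y ^+ 2) ^+ 2 - 4 * r ^+ 2].
Proof.
move=> e r0 rS; set S := hn x ^+ 2 + hn y ^+ 2 in rS *.
have [c [s [cs1 orth]]] := hyperbolic_params r0 rS.
exists (ofR c *: x + ofR s *: y), (ofR s *: x + ofR c *: y); split.
- by rewrite (ip_combR _ _ _ _ e) -(rmorph0 ofR) -orth; congr (ofR _); rewrite /S; ring.
- by move=> z; rewrite hyperbolic_intensity_gap.
- rewrite (hnorm_combR _ _ e) (hnorm_combR _ _ e).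
  transitivity ((c ^+ 2 - s ^+ 2) ^+ 2 * (S ^+ 2 - 4 * r ^+ 2)
                + 4 * (c * s * S + (c ^+ 2 + s ^+ 2) * r) ^+ 2).
    by rewrite /S; ring.
  by rewrite cs1 orth; ring.
Qed.

Lemma hyperbolic_decomposition x y : exists lam u v,
  [/\ absK lam = 1, ip u v = 0,
      forall z, absK (ip u z) ^+ 2 - absK (ip v z) ^+ 2
              = absK (ip x z) ^+ 2 - absK (ip y z) ^+ 2 &
      hn (x - lam *: y) * (hn x + hn y) <= 2 * (hn u ^+ 2 + hn v ^+ 2)].
Proof.
have [w w1 e] := ip_phase x y.
set r := absK (ip x y) in e; set y1 := w *: y in e *.
have hy1 : hn y1 = hn y by rewrite hnormZ w1 mul1r.
have ip_y1 z : absK (ip y1 z) = absK (ip y z) by rewrite ipZl absM w1 mul1r.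
have r0 : 0 <= r := abs_ge0 _.
set a := hn x; set b := hn y in hy1 *; set S := a ^+ 2 + b ^+ 2.
have hd : hn (x - y1) ^+ 2 = S - 2 * r.
  rewrite -[x - y1]/(x + - y1) -scaleN1r -[x]scale1r -(rmorphN1 ofR) -(rmorph1 ofR).
  by rewrite (hnorm_combR _ _ e) hy1 -/a /S; ring.
exists w; have [gap0|gap_pos] : S - 2 * r = 0 \/ 0 < S - 2 * r.
  by rewrite -hd; have := sqr_ge0 (hn (x - y1)); rewrite le_eqVlt => /orP[/eqP|]; auto.
  have xy1 : x = y1.
    by apply/hnorm_sub_le0; rewrite -(@ler_pXn2r _ 2) ?nnegrE ?hnorm_ge0 // hd gap0 expr0n.
  exists 0, 0; split => //; first exact: ip0l.
    by move=> z; rewrite ip0l abs0 subrr xy1 ip_y1 subrr.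
  by rewrite -/y1 xy1 subrr hnorm0 mul0r expr0n /= addr0 mulr0.
have rS : 2 * r < hn x ^+ 2 + hn y1 ^+ 2 by move: gap_pos; rewrite hy1 -/a /S; lra.
have [u [v [uv uv_int]]] := hyperbolic_orthogonalize e r0 rS.
rewrite hy1 -/a -/S => uv_sqr.
exists u, v; split => //; first by move=> z; rewrite uv_int ip_y1.
have hS2 : (a + b) ^+ 2 <= 4 * (S + 2 * r) by rewrite /S; have := sqr_ge0 (a - b); nra.
rewrite -/y1 -(@ler_pXn2r _ 2) ?nnegrE ?mulr_ge0 ?addr_ge0 ?hnorm_ge0 ?sqr_ge0 //.
rewrite exprMn (_ : hn (x - y1) ^+ 2 = S - 2 * r) // exprMn uv_sqr.
rewrite (_ : 2 ^+ 2 = 4); last by rewrite expr2 -natrM.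
rewrite (_ : S ^+ 2 - 4 * r ^+ 2 = (S - 2 * r) * (S + 2 * r)); last by ring.
by rewrite [X in _ <= X]mulrCA ler_wpM2l // ltW.
Qed.

Section Frame.
Variables (d : measure_display) (T : measurableType d)
  (mu : {measure set T -> \bar R}) (xt : T -> 'rV[K]_n).
Local Notation Th := (absTheta conj absK xt).
Hypothesis mTh : forall x, measurable_fun setT (Th x).
Variable B : R.
Hypothesis B0 : 0 < B.
Hypothesis upper : forall x,
  (\int[mu]_t ((Th x t) ^+ 2)%:E <= (B * hn x ^+ 2)%:E)%E.

Lemma absTheta_ge0 x t : 0 <= Th x t.
Proof. exact: abs_ge0. Qed.

Lemma absThetaZ k x t : Th (ofR k *: x) t = `|k| * Th x t.
Proof. by rewrite /absTheta ipZl absM absR. Qed.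

Lemma ler_dist_absTheta x y t : `|Th x t - Th y t| <= Th (x - y) t.
Proof. by rewrite /absTheta ipBl ler_dist_abs. Qed.

Lemma measurable_sqr_absTheta x : measurable_fun setT (fun t => Th x t ^+ 2).
Proof. exact: measurable_funX. Qed.

Definition theta_wsum (s : seq (R * 'rV[K]_n)) t := \sum_(p <- s) p.1 * Th p.2 t ^+ 2.

Lemma theta_wsum_ge0 s t : all (fun p => 0 <= p.1) s -> 0 <= theta_wsum s t.
Proof.
move=> s0; rewrite /theta_wsum big_seq sumr_ge0 // => p ps.
by rewrite mulr_ge0 ?sqr_ge0 //; apply: (allP s0).
Qed.

Lemma measurable_theta_wsum s : measurable_fun setT (theta_wsum s).
Proof.
elim: s => [|p s IH]; rewrite /theta_wsum.
  by under eq_fun do rewrite big_nil; exact: measurable_cst.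
under eq_fun do rewrite big_cons.
exact: measurable_funD (measurable_funM (measurable_cst _) (measurable_sqr_absTheta _)) IH.
Qed.

Lemma integral_theta_wsum_le s : all (fun p => 0 <= p.1) s ->
  (\int[mu]_t (theta_wsum s t)%:E <= (B * \sum_(p <- s) p.1 * hn p.2 ^+ 2)%:E)%E.
Proof.
elim: s => [|p s IH] /=.
  rewrite big_nil mulr0 /theta_wsum; under eq_integral do rewrite big_nil.
  by rewrite integral0.
case/andP => p0 s0; rewrite big_cons /theta_wsum.
under eq_integral do rewrite big_cons EFinD.
rewrite ge0_integralD //; first last.
- exact/measurable_EFinP/measurable_theta_wsum.
- by move=> t _; rewrite lee_fin theta_wsum_ge0.
- exact/measurable_EFinP/measurable_funM/measurable_sqr_absTheta.
- by move=> t _; rewrite lee_fin mulr_ge0 ?sqr_ge0.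
rewrite mulrDr EFinD leeD ?IH //.
under eq_integral do rewrite EFinM.
rewrite ge0_integralZl_EFin //; first last.
- exact/measurable_EFinP/measurable_sqr_absTheta.
- by move=> t _; rewrite lee_fin sqr_ge0.
by rewrite mulrCA EFinM lee_wpmul2l ?lee_fin.
Qed.

Lemma integral_le_add_theta_wsum (f g : T -> R) s :
  measurable_fun setT f -> measurable_fun setT g ->
  (forall t, 0 <= g t) -> all (fun p => 0 <= p.1) s ->
  (forall t, 0 <= f t <= g t + theta_wsum s t) ->
  (\int[mu]_t (f t)%:E <= \int[mu]_t (g t)%:E + (B * \sum_(p <- s) p.1 * hn p.2 ^+ 2)%:E)%E.
Proof.
move=> mf mg g0 s0 fg; apply: le_trans (leeD (lexx _) (integral_theta_wsum_le s0)).
rewrite -ge0_integralD //; last 4 first.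
- by move=> t _; rewrite lee_fin.
- exact/measurable_EFinP.
- by move=> t _; rewrite lee_fin theta_wsum_ge0.
- exact/measurable_EFinP/measurable_theta_wsum.
apply: ge0_le_integral => //.
- by move=> t _; rewrite lee_fin; case/andP: (fg t).
- exact/measurable_EFinP.
- exact/measurable_EFinP/measurable_funD/measurable_theta_wsum.
- by move=> t _; rewrite -EFinD lee_fin; case/andP: (fg t).
Qed.

Definition gap_integrand x y t := `|Th x t ^+ 2 - Th y t ^+ 2|.

Lemma measurable_gap_integrand x y : measurable_fun setT (gap_integrand x y).
Proof.
exact: measurableT_comp (@normr_measurable _ _)
  (measurable_funB (measurable_sqr_absTheta _) (measurable_sqr_absTheta _)).
Qed.

Definition gap x y := fine (\int[mu]_t (gap_integrand x y t)%:E).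

Lemma integral_gap x y : (\int[mu]_t (gap_integrand x y t)%:E = (gap x y)%:E)%E.
Proof.
have int_ge0 : (0 <= \int[mu]_t (gap_integrand x y t)%:E)%E.
  by apply: integral_ge0 => t _; rewrite lee_fin normr_ge0.
rewrite fineK // ge0_fin_numE //.
have := @integral_le_add_theta_wsum (gap_integrand x y) (cst 0) [:: (1, x); (1, y)].
rewrite integral0 add0e /= ler01 !big_cons big_nil !mul1r addr0 => le.
apply: le_lt_trans (le _ _ _ isT _) (ltry _) => //.
- exact: measurable_gap_integrand.
move=> t; rewrite /gap_integrand /theta_wsum !big_cons big_nil !mul1r addr0 add0r.
rewrite normr_ge0 /= (le_trans (ler_normB _ _)) //.
by rewrite !ger0_norm ?sqr_ge0.
Qed.

Lemma gap_ge0 x y : 0 <= gap x y.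
Proof. by rewrite -lee_fin -integral_gap integral_ge0 // => t _; rewrite lee_fin normr_ge0. Qed.

Lemma gap_le x y x' y' e : 0 < e ->
  gap x y <= gap x' y' + ((2 * e)^-1 * B * (hn (x - x') ^+ 2 + hn (y - y') ^+ 2)
                          + e * B * (hn x ^+ 2 + hn x' ^+ 2 + hn y ^+ 2 + hn y' ^+ 2)).
Proof.
move=> e0; pose c := (2 * e)^-1.
pose s := [:: (c, x - x'); (c, y - y'); (e, x); (e, x'); (e, y); (e, y')].
have s0 : all (fun p => 0 <= p.1) s by rewrite /= invr_ge0 mulr_ge0 ?ltW.
have := integral_le_add_theta_wsum (measurable_gap_integrand x y)
  (measurable_gap_integrand x' y') (fun t => normr_ge0 _) s0.
rewrite !integral_gap -EFinD lee_fin.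
have -> : c * B * (hn (x - x') ^+ 2 + hn (y - y') ^+ 2)
          + e * B * (hn x ^+ 2 + hn x' ^+ 2 + hn y ^+ 2 + hn y' ^+ 2) =
          B * \sum_(p <- s) p.1 * hn p.2 ^+ 2.
  by rewrite /s !big_cons big_nil /=; ring.
apply => t; rewrite /gap_integrand normr_ge0 /= /theta_wsum /s !big_cons big_nil /=.
have := sqr_dist_le (absTheta_ge0 x t) (absTheta_ge0 x' t) (ler_dist_absTheta x x' t) e0.
have := sqr_dist_le (absTheta_ge0 y t) (absTheta_ge0 y' t) (ler_dist_absTheta y y' t) e0.
have : `|Th x t ^+ 2 - Th y t ^+ 2| <= `|Th x' t ^+ 2 - Th y' t ^+ 2| +
   `|Th x t ^+ 2 - Th x' t ^+ 2| + `|Th y t ^+ 2 - Th y' t ^+ 2|.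
  rewrite (_ : Th x t ^+ 2 - Th y t ^+ 2 = Th x' t ^+ 2 - Th y' t ^+ 2 +
     (Th x t ^+ 2 - Th x' t ^+ 2) - (Th y t ^+ 2 - Th y' t ^+ 2)); last by ring.
  by apply: le_trans (ler_normB _ _) _; rewrite lerD2r ler_normD.
rewrite /c; lra.
Qed.

Lemma gapZ k x y : gap (ofR k *: x) (ofR k *: y) = k ^+ 2 * gap x y.
Proof.
apply: EFin_inj; rewrite -integral_gap EFinM -integral_gap -ge0_integralZl_EFin //.
- apply: eq_integral => t _; rewrite /gap_integrand !absThetaZ -EFinM !exprMn -mulrBr.
  by rewrite normrM real_normK ?num_real // ger0_norm ?sqr_ge0.
- by move=> t _; rewrite lee_fin normr_ge0.
- exact/measurable_EFinP/measurable_gap_integrand.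
- exact: sqr_ge0.
Qed.

Lemma gap_eq0_ae x y : gap x y = 0 -> {ae mu, forall t, Th x t = Th y t}.
Proof.
move=> g0; have : (\int[mu]_(t in setT) `|(gap_integrand x y t)%:E| = 0)%E.
  rewrite -[RHS]/(0%:E) -g0 -integral_gap; apply: eq_integral => t _.
  by rewrite gee0_abs // lee_fin normr_ge0.
move/(ae_eq_integral_abs mu measurableT _).1.
move/(_ ((measurable_EFinP _ _).2 (measurable_gap_integrand x y))).
apply: filterS => t /(_ I) /eqP; rewrite eqe normr_eq0 subr_eq0.
by rewrite eqrXn2 ?absTheta_ge0 // => /eqP.
Qed.

Lemma gap_dist_le x y x' y' (delta : R) : 0 <= delta ->
  hn (x' - x) <= delta -> hn (y' - y) <= delta ->
  `|gap x' y' - gap x y| <=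
    delta * B * (1 + hn x ^+ 2 + hn x' ^+ 2 + hn y ^+ 2 + hn y' ^+ 2).
Proof.
move=> d0; have [->|dn0] := eqVneq delta 0 => xd yd.
  by rewrite (hnorm_sub_le0 xd) (hnorm_sub_le0 yd) subrr normr0 !mul0r.
have dp : 0 < delta by rewrite lt_neqAle eq_sym dn0.
have sq z : hn z <= delta -> (2 * delta)^-1 * B * hn z ^+ 2 <= delta * B / 2.
  move=> zd; rewrite (_ : delta * B / 2 = (2 * delta)^-1 * B * delta ^+ 2); last first.
    by field; rewrite gt_eqF.
  rewrite ler_wpM2l ?mulr_ge0 ?invr_ge0 ?mulr_ge0 ?(ltW dp) ?(ltW B0) //.
  by rewrite ler_pXn2r ?nnegrE ?hnorm_ge0 ?(ltW dp).
have := gap_le x' y' x y dp; have := gap_le x y x' y' dp.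
rewrite (hnorm_distC x) (hnorm_distC y).
have := sq _ xd; have := sq _ yd; rewrite ler_norml; lra.
Qed.

Lemma gap_le_L2_eps x y (D e : R) : 0 < e ->
  (\int[mu]_t ((Th x t - Th y t) ^+ 2)%:E = (D ^+ 2)%:E)%E ->
  gap x y <= D ^+ 2 / (2 * e) + e * B * (hn x ^+ 2 + hn y ^+ 2).
Proof.
move=> e0 xyD; pose c := (2 * e)^-1; pose s := [:: (e, x); (e, y)].
have c0 : 0 <= c by rewrite invr_ge0 mulr_ge0 // ltW.
have mxy : measurable_fun setT (fun t => (Th x t - Th y t) ^+ 2).
  exact/measurable_funX/measurable_funB.
have := @integral_le_add_theta_wsum (gap_integrand x y) (fun t => c * (Th x t - Th y t) ^+ 2) s
  (measurable_gap_integrand x y) (measurable_funM (measurable_cst _) mxy).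
have -> : (\int[mu]_t (c * (Th x t - Th y t) ^+ 2)%:E = (c * D ^+ 2)%:E)%E.
  under eq_integral do rewrite EFinM.
  rewrite ge0_integralZl_EFin ?xyD ?EFinM //.
  - by move=> t _; rewrite lee_fin sqr_ge0.
  - exact/measurable_EFinP.
rewrite integral_gap -EFinD lee_fin => /(_ _ _ _) le; apply: le_trans (le _ _ _) _.
- by move=> t; rewrite mulr_ge0 ?sqr_ge0.
- by rewrite /= ltW.
- move=> t; rewrite /gap_integrand normr_ge0 /theta_wsum /s !big_cons big_nil /=.
  have := sqr_dist_le (absTheta_ge0 x t) (absTheta_ge0 y t) (lexx _) e0.
  by rewrite real_normK ?num_real // /c; lra.
- by rewrite /s !big_cons big_nil /= /c; lra.
Qed.

Lemma Lnorm2_sqr (g : T -> R) :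
  ((Lnorm mu 2%:E (fun t => (g t)%:E)) `^ 2 = \int[mu]_t ((g t) ^+ 2)%:E)%E.
Proof.
rewrite poweR_Lnorm ?pnatr_eq0 //; apply: eq_integral => t _.
by rewrite abse_EFin poweR_EFin powR_mulrn // real_normK // num_real.
Qed.

Lemma Lnorm_absTheta_eq0 x y : {ae mu, forall t, Th x t = Th y t} ->
  Lnorm mu 2%:E (fun t => (Th x t - Th y t)%:E) = 0%E.
Proof.
move=> xy; apply: (@poweR_eq0_eq0 _ _ 2); first exact: Lnorm_ge0.
rewrite Lnorm2_sqr (ae_eq_integral (cst 0%E)) ?integral0 //.
- exact/measurable_EFinP/measurable_funX/measurable_funB.
- by apply: filterS xy => t /= ->; rewrite subrr expr0n.
Qed.

Lemma ae_absTheta_Lnorm_eq0 x y : Lnorm mu 2%:E (fun t => (Th x t - Th y t)%:E) = 0%E ->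
  {ae mu, forall t, Th x t = Th y t}.
Proof.
move/Lnorm_eq0_eq0 => /(_ ((measurable_EFinP _ _).2 (measurable_funB (mTh x) (mTh y)))).
move=> /(_ (ltac:(by rewrite lte_fin) : (0 < 2%:E)%E)).
by apply: filterS => t /(_ I) /eqP; rewrite eqe subr_eq0 => /eqP.
Qed.

Lemma phase_retrieval_of_stable C : 0 < C ->
  does_stable_phase_retrieval conj absK mu C xt -> does_phase_retrieval conj absK mu xt.
Proof.
move=> C0 stable x y xy; have [lam [lam1]] := stable x y.
rewrite Lnorm_absTheta_eq0 // mule0 lee_fin => le0.
by exists lam; split => //; apply: hnorm_sub_le0.
Qed.

Lemma gap_le_L2 x y (D : R) : 0 < D -> 0 < hn x + hn y ->
  (\int[mu]_t ((Th x t - Th y t) ^+ 2)%:E = (D ^+ 2)%:E)%E ->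
  gap x y <= 3 / 2 * (Num.sqrt B * D * (hn x + hn y)).
Proof.
move=> D0 S0 xyD; set S := hn x + hn y in S0 *; set sB := Num.sqrt B.
have sB0 : 0 < sB by rewrite sqrtr_gt0.
have sB2 : B = sB ^+ 2 by rewrite sqr_sqrtr // ltW.
(* the choice of [e] balancing the two terms of [gap_le_L2_eps] *)
have e0 : 0 < D / (S * sB) by rewrite divr_gt0 ?mulr_gt0.
apply: le_trans (gap_le_L2_eps e0 xyD) _.
have Q : hn x ^+ 2 + hn y ^+ 2 <= S ^+ 2.
  by have := hnorm_ge0 x; have := hnorm_ge0 y; rewrite /S; nra.
have -> : D ^+ 2 / (2 * (D / (S * sB))) = sB * D * S / 2 by field; rewrite !gt_eqF.
have : D / (S * sB) * B * (hn x ^+ 2 + hn y ^+ 2) <= sB * D * S.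
  rewrite (_ : sB * D * S = D / (S * sB) * B * S ^+ 2).
    by rewrite ler_wpM2l // mulr_ge0 ?ltW.
  by rewrite sB2; field; rewrite !gt_eqF.
lra.
Qed.

Lemma exists_phase_dist_le c x y (D : R) : 0 < c ->
  (forall u v, ip u v = 0 -> c * (hn u + hn v) ^+ 2 <= gap u v) -> 0 < D ->
  (\int[mu]_t ((Th x t - Th y t) ^+ 2)%:E = (D ^+ 2)%:E)%E ->
  exists2 lam, absK lam = 1 & hn (x - lam *: y) <= 3 * Num.sqrt B / c * D.
Proof.
move=> c0 lower D0 xyD; have sB0 : 0 < Num.sqrt B by rewrite sqrtr_gt0.
have [lam [u [v [lam1 uv uv_int dec]]]] := hyperbolic_decomposition x y.
exists lam => //; set S := hn x + hn y in dec *.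
have := addr_ge0 (hnorm_ge0 x) (hnorm_ge0 y); rewrite -/S le0r => /orP[/eqP S0|Sp].
  have := hnorm_ge0 x; have := hnorm_ge0 y; rewrite /S in S0 => hy hx.
  have [x0 y0] : x = 0 /\ y = 0 by split; apply: hnorm_eq0; lra.
  by rewrite x0 y0 scaler0 subrr hnorm0 !mulr_ge0 ?invr_ge0 ?ltW.
have gap_uv : gap u v = gap x y.
  by congr fine; apply: eq_integral => t _; rewrite /gap_integrand /absTheta uv_int.
have up := gap_le_L2 D0 Sp xyD; have := lower u v uv; rewrite gap_uv => low.
have P : hn u ^+ 2 + hn v ^+ 2 <= (hn u + hn v) ^+ 2.
  by have := hnorm_ge0 u; have := hnorm_ge0 v; nra.
have := ler_wpM2l (ltW c0) (le_trans dec (ler_wpM2l (ler0n _ 2) P)) => cHS.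
rewrite -(ler_pM2r Sp) -(ler_pM2l c0).
rewrite (_ : c * (3 * Num.sqrt B / c * D * S) = 3 * (Num.sqrt B * D * S)); last first.
  by field; rewrite gt_eqF.
by move: up; rewrite -/S; lra.
Qed.

Section Parametrization.
Variables (m : nat) (E : 'rV[R]_m -> 'rV[K]_n) (L : R).
Hypothesis L0 : 0 <= L.
Hypothesis E_B : {morph E : w w' / w - w'}.
Hypothesis E_lip : forall w, hn (E w) <= L * `|w|.
Hypothesis E_onto : forall u, exists2 w, E w = u & `|w| <= hn u.

Let pu (w : 'rV[R]_(m + m)) := E (lsubmx w).
Let pv (w : 'rV[R]_(m + m)) := E (rsubmx w).

Lemma pu_dist w w' : hn (pu w' - pu w) <= L * `|w' - w|.
Proof. by rewrite -E_B -linearB (le_trans (E_lip _)) // ler_wpM2l ?norm_lsubmx_le. Qed.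

Lemma pv_dist w w' : hn (pv w' - pv w) <= L * `|w' - w|.
Proof. by rewrite -E_B -linearB (le_trans (E_lip _)) // ler_wpM2l ?norm_rsubmx_le. Qed.

Lemma pair_onto u v : exists w, [/\ pu w = u, pv w = v & `|w| <= hn u + hn v].
Proof.
have [[a Ea a_le] [b Eb b_le]] := (E_onto u, E_onto v).
exists (row_mx a b); rewrite /pu /pv row_mxKl row_mxKr; split => //.
exact: le_trans (norm_row_mx_le a b) (lerD a_le b_le).
Qed.

(* Vanishes exactly at the pairs (u, v) that are orthogonal, normalized by
   ||u|| + ||v|| = 1, and not distinguished by their intensity measurements. *)
Definition ambiguity w :=
  gap (pu w) (pv w) + absK (ip (pu w) (pv w)) + `|hn (pu w) + hn (pv w) - 1|.

Lemma continuous_ambiguity : continuous ambiguity.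
Proof.
apply: continuous_locally_lipschitz => w.
set u := pu w; set v := pv w; set a := hn u; set b := hn v.
set K1 := 1 + a ^+ 2 + (a + L) ^+ 2 + b ^+ 2 + (b + L) ^+ 2.
exists (L * B * K1 + L * (a + b + L) + 2 * L) => w' w1; set dd := `|w' - w|.
set u' := pu w'; set v' := pv w'.
have du : hn (u' - u) <= L * dd := pu_dist w w'.
have dv : hn (v' - v) <= L * dd := pv_dist w w'.
have dd0 : 0 <= dd := normr_ge0 _.
have Ld : L * dd <= L by rewrite ler_piMr.
have hu' : hn u' <= a + L by have := hnormD (u' - u) u; rewrite subrK -/a; lra.
have hv' : hn v' <= b + L by have := hnormD (v' - v) v; rewrite subrK -/b; lra.
have a0 : 0 <= a := hnorm_ge0 _; have b0 : 0 <= b := hnorm_ge0 _.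
have d_gap : `|gap u' v' - gap u v| <= L * B * K1 * dd.
  apply: le_trans (gap_dist_le (mulr_ge0 L0 dd0) du dv) _.
  rewrite (_ : L * B * K1 * dd = L * dd * B * K1); last by ring.
  rewrite ler_wpM2l ?mulr_ge0 ?(ltW B0) // /K1.
  have : hn u' ^+ 2 <= (a + L) ^+ 2 by rewrite ler_pXn2r ?nnegrE ?addr_ge0 ?hnorm_ge0.
  have : hn v' ^+ 2 <= (b + L) ^+ 2 by rewrite ler_pXn2r ?nnegrE ?addr_ge0 ?hnorm_ge0.
  rewrite -/a -/b; lra.
have d_ip : `|absK (ip u' v') - absK (ip u v)| <= L * (a + b + L) * dd.
  apply: le_trans (ler_dist_abs_ip u v u' v') _.
  have : hn (u' - u) * hn v' <= L * dd * (b + L) by rewrite ler_pM ?hnorm_ge0.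
  have : a * hn (v' - v) <= a * (L * dd) by rewrite ler_wpM2l.
  rewrite (_ : L * (a + b + L) * dd = L * dd * (b + L) + a * (L * dd)); last by ring.
  rewrite -/a; lra.
have d_nrm : `| `|hn u' + hn v' - 1| - `|a + b - 1| | <= 2 * L * dd.
  apply: le_trans (ler_dist_dist _ _) _.
  rewrite (_ : hn u' + hn v' - 1 - (a + b - 1) = (hn u' - a) + (hn v' - b)); last by ring.
  apply: le_trans (ler_normD _ _) _.
  have := ler_dist_hnorm u' u; have := ler_dist_hnorm v' v; rewrite -/a -/b; lra.
rewrite /ambiguity -/u -/v -/u' -/v' -/a -/b.
rewrite [X in `|X|](_ : _ = (gap u' v' - gap u v) + (absK (ip u' v') - absK (ip u v))
    + (`|hn u' + hn v' - 1| - `|a + b - 1|)); last by ring.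
apply: le_trans (ler_normD _ _) _.
have := ler_normD (gap u' v' - gap u v) (absK (ip u' v') - absK (ip u v)); lra.
Qed.

Lemma ambiguity_gt0 w : does_phase_retrieval conj absK mu xt -> 0 < ambiguity w.
Proof.
move=> PR; rewrite /ambiguity; set u := pu w; set v := pv w.
have := gap_ge0 u v; have := abs_ge0 (ip u v); have := normr_ge0 (hn u + hn v - 1).
rewrite lt_neqAle eq_sym => h3 h2 h1; rewrite !addr_ge0 // andbT.
apply/eqP => amb0.
have [lam [lam1 uv]] := PR u v (gap_eq0_ae (ltac:(lra) : gap u v = 0)).
have ip0 : ip u v = 0 by apply: abs_eq0; lra.
have hv0 : hn v = 0.
  move/(congr1 absK): ip0; rewrite uv ipZl ip_selfE absM lam1 mul1r absR abs0.
  by move/normr0_eq0/eqP; rewrite sqrf_eq0 => /eqP.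
have hu0 : hn u = 0 by rewrite uv hnormZ hv0 mulr0.
by move: amb0 h2 h3; rewrite hu0 hv0 add0r sub0r normrN normr1; lra.
Qed.

Lemma gap_lower_bound : does_phase_retrieval conj absK mu xt ->
  exists2 c, 0 < c & forall u v, ip u v = 0 -> c * (hn u + hn v) ^+ 2 <= gap u v.
Proof.
move=> PR; have [w0 _ w0_min] := closed_ball_min continuous_ambiguity.
exists (ambiguity w0) => [|u v uv]; first exact: ambiguity_gt0.
set S := hn u + hn v; have S0 : 0 <= S by rewrite addr_ge0 ?hnorm_ge0.
have [->|Sn0] := eqVneq S 0; first by rewrite expr0n /= mulr0 gap_ge0.
have Sp : 0 < S by rewrite lt_neqAle eq_sym Sn0.
have [w [uw vw w1]] := pair_onto (ofR S^-1 *: u) (ofR S^-1 *: v).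
have hnS z : hn (ofR S^-1 *: z) = S^-1 * hn z by rewrite hnormZ absR ger0_norm ?invr_ge0.
have S1 : hn (ofR S^-1 *: u) + hn (ofR S^-1 *: v) = 1 by rewrite !hnS -mulrDr mulVf.
have amb_w : ambiguity w = S^-1 ^+ 2 * gap u v.
  by rewrite /ambiguity uw vw S1 subrr normr0 addr0 ipZl ipZr uv !mulr0 abs0 addr0 gapZ.
have := w0_min w; rewrite -S1 amb_w => /(_ w1) le.
apply: le_trans (ler_wpM2r (sqr_ge0 S) le) _.
by rewrite mulrAC -exprMn mulVf // expr1n mul1r.
Qed.


Lemma stable_of_phase_retrieval : does_phase_retrieval conj absK mu xt ->
  exists C, 0 < C /\ does_stable_phase_retrieval conj absK mu C xt.
Proof.
move=> PR; have [c c0 lower] := gap_lower_bound PR.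
have C0 : 0 < 3 * Num.sqrt B / c by rewrite divr_gt0 ?mulr_gt0 ?sqrtr_gt0.
exists (3 * Num.sqrt B / c); split => // x y.
set N := Lnorm _ _ _; have N0 : (0 <= N)%E by exact: Lnorm_ge0.
have [Noo|Nfin] := eqVneq N +oo%E.
  by exists 1; rewrite abs1 Noo gt0_muley ?lte_fin ?leey.
have ND : N = (fine N)%:E by rewrite fineK // ge0_fin_numE // ltey.
set D := fine N in ND.
have : 0 <= D by rewrite -lee_fin -ND.
rewrite le0r => /orP[/eqP D0|Dp].
  have [lam [lam1 xlam]] := PR x y (ae_absTheta_Lnorm_eq0 (etrans ND (congr1 _ D0))).
  by exists lam; rewrite xlam subrr hnorm0 mule_ge0 // lee_fin ltW.
have xyD : (\int[mu]_t ((Th x t - Th y t) ^+ 2)%:E = (D ^+ 2)%:E)%E.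
  by rewrite -Lnorm2_sqr -/N ND poweR_EFin powR_mulrn ?(ltW Dp).
have [lam lam1 le] := exists_phase_dist_le c0 lower Dp xyD.
by exists lam; rewrite ND -EFinM lee_fin.
Qed.

End Parametrization.
End Frame.

(* E is a real coordinate chart of K^n; it transports the compactness of the
   closed unit ball of a real coordinate space. *)
Theorem phase_retrieval_iff_stable (m : nat) (E : 'rV[R]_m -> 'rV[K]_n) (L : R) :
  0 <= L -> {morph E : w w' / w - w'} -> (forall w i, absK (E w ord0 i) <= L * `|w|) ->
  (forall u, exists2 w, E w = u & forall j, exists i, `|w ord0 j| <= absK (u ord0 i)) ->
  forall (d : measure_display) (T : measurableType d)
    (mu : {measure set T -> \bar R}) (xt : T -> 'rV[K]_n),
  is_continuous_frame conj absK mu xt ->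
  (does_phase_retrieval conj absK mu xt <->
   exists C, 0 < C /\ does_stable_phase_retrieval conj absK mu C xt).
Proof.
move=> L0 E_B E_lip E_onto d T mu xt [mTh [A [B [A0 [AB frame]]]]].
have B0 : 0 < B := lt_le_trans A0 AB.
split => [|[C [C0]]]; last exact: phase_retrieval_of_stable.
apply: (stable_of_phase_retrieval mTh B0 (fun x => (frame x).2) (L := n%:R * L)) E_B _ _.
- by rewrite mulr_ge0.
- by move=> w; rewrite -mulrA; apply: hnorm_le_bound.
- move=> u; have [w Ew wu] := E_onto u; exists w => //.
  apply: mx_norm_le => [|i j]; first exact: hnorm_ge0.
  by rewrite ord1; have [k /le_trans] := wu j; apply; apply: abs_coord_le_hnorm.
Qed.

End InnerProduct.

Lemma real_phase_retrieval_iff_stable (R : realType) :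
  corollary2p3_for (K := R) (fun z => z) (fun z => `|z|).
Proof.
move=> d T mu n xt.
apply: (@phase_retrieval_iff_stable R R _ _ idfun _ _ _ _ _ _ _ n n id 1) => //.
- by move=> a; rewrite real_normK ?num_real.
- exact: ler_normD.
- by move=> w i; rewrite mul1r mx_entry_le_norm.
- by move=> u; exists u => // j; exists j.
Qed.

Section ComplexScalars.
Variable R : realType.
Local Notation normc := (@ComplexField.Normc.normc R).

Lemma mulc_conjc (z : R[i]) : z * conjc z = (normc z ^+ 2)%:C%C.
Proof.
case: z => a b; rewrite /ComplexField.Normc.normc /= sqr_sqrtr ?addr_ge0 ?sqr_ge0 //.
by apply/eqP; rewrite eq_complex /=; apply/andP; split; apply/eqP; ring.
Qed.

Lemma normc_Complex_le (a b : R) : normc (Complex a b) <= `|a| + `|b|.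
Proof.
rewrite /ComplexField.Normc.normc /= -(@ler_pXn2r _ 2) ?nnegrE ?sqrtr_ge0 ?addr_ge0 //.
rewrite sqr_sqrtr ?addr_ge0 ?sqr_ge0 // -[a ^+ 2]real_normK ?num_real //.
rewrite -[b ^+ 2]real_normK ?num_real // sqrrD -addrA lerD2l lerDr.
by rewrite mulrn_wge0 ?mulr_ge0.
Qed.

Lemma normc_ge_Re (z : R[i]) : `|complex.Re z| <= normc z.
Proof.
case: z => a b; rewrite /ComplexField.Normc.normc -sqrtr_sqr ler_sqrt /=.
  by rewrite lerDl sqr_ge0.
by rewrite addr_ge0 ?sqr_ge0.
Qed.

Lemma normc_ge_Im (z : R[i]) : `|complex.Im z| <= normc z.
Proof.
case: z => a b; rewrite /ComplexField.Normc.normc -sqrtr_sqr ler_sqrt /=.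
  by rewrite lerDr sqr_ge0.
by rewrite addr_ge0 ?sqr_ge0.
Qed.

Lemma complex_phase_retrieval_iff_stable :
  corollary2p3_for (K := R[i]) (@conjc R) (@ComplexField.Normc.normc R).
Proof.
move=> d T mu n xt.
pose E (w : 'rV[R]_(n + n)) : 'rV[R[i]]_n :=
  \row_i Complex (w ord0 (lshift n i)) (w ord0 (rshift n i)).
apply: (@phase_retrieval_iff_stable R R[i] _ _ (real_complex R)
  _ _ _ _ _ _ _ n (n + n) E 2) => //.
- exact: rmorphD.
- exact: rmorphM.
- exact: conjcK.
- exact: conjc_real.
- exact: mulc_conjc.
- exact: le_normcD.
- by case=> a b; exact: sqrtr_ge0.
- by move=> w w'; apply/rowP => i; rewrite !mxE.
- move=> w i; rewrite mxE (le_trans (normc_Complex_le _ _)) // mulr2n mulrDl mul1r.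
  by rewrite lerD ?mx_entry_le_norm.
- move=> u; exists (row_mx (\row_i complex.Re (u ord0 i)) (\row_i complex.Im (u ord0 i))).
    by apply/rowP => i; rewrite mxE row_mxEl row_mxEr !mxE; case: (u ord0 i).
  move=> j; rewrite mxE; case: splitP => k _; rewrite mxE; exists k.
    exact: normc_ge_Re.
  exact: normc_ge_Im.
Qed.

End ComplexScalars.

Theorem corollary2p3 (R : realType) :
  corollary2p3_for (K := R) (fun z => z) (fun z => `|z|) /\
  corollary2p3_for (K := R[i]) (@conjc R) (@ComplexField.Normc.normc R).
Proof.
split; [exact: real_phase_retrieval_iff_stable | exact: complex_phase_retrieval_iff_stable].
Qed.
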